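(* Let $\Omega$ be either $\mathbb{C}$ with the Euclidean distance or $\mathbb{D}$ with the hyperbolic distance. For any line segment $I\subset\Omega$ and any locally doubling measure $\mu$ in $\Omega$, $\mu(I)=0$.
   Context: A positive measure $\mu$ on $\Omega$ is locally doubling if there is $C>1$ such that $\mu(B)\le C\mu(B')$ for every ball $B\subset\Omega$ (in the distance of $\Omega$) of radius smaller than $1$, where $B'$ is the ball with the same center and half the radius. *)

(* The complex plane C is modelled as R * R
   (z = (Re z, Im z)) with its product (= Borel) sigma-algebra. *)
From HB Require Import structures.
From mathcomp Require Import all_boot all_order all_algebra.
From mathcomp Require Import all_classical all_reals all_analysis.
Set Implicit Arguments. Unset Strict Implicit. Unset Printing Implicit Defensive.
Import Order.TTheory GRing.Theory Num.Theory.
Local Open Scope classical_set_scope.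
Local Open Scope ring_scope.

Section Defs.
Variable R : realType.
Local Notation C := (R * R)%type.

Definition cabs (z : C) : R := Num.sqrt (z.1 ^+ 2 + z.2 ^+ 2).
Definition csub (z w : C) : C := (z.1 - w.1, z.2 - w.2).
Definition cmul (z w : C) : C := (z.1 * w.1 - z.2 * w.2, z.1 * w.2 + z.2 * w.1).
Definition cconj (z : C) : C := (z.1, - z.2).
Definition cone : C := (1, 0).

Definition eucl_dist (z w : C) : R := cabs (csub z w).

Definition unit_disc : set C := [set z | cabs z < 1].

(* hyperbolic distance on D (curvature -1):
   d(z,w) = 2 artanh (|z - w| / |1 - conj(w) z|)
          = ln ((1 + t) / (1 - t)),  t = |z - w| / |1 - conj(w) z| *)
Definition hyp_dist (z w : C) : R :=
  let t := cabs (csub z w) / cabs (csub cone (cmul (cconj w) z)) in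
  ln ((1 + t) / (1 - t)).

Inductive omega_space := Plane | Disc.

Definition Omega (s : omega_space) : set C :=
  match s with Plane => setT | Disc => unit_disc end.

Definition dist (s : omega_space) : C -> C -> R :=
  match s with Plane => eucl_dist | Disc => hyp_dist end.

Definition oball (s : omega_space) (c : C) (r : R) : set C :=
  [set z | Omega s z /\ dist s c z < r].

Definition segment (a b : C) : set C :=
  [set z | exists2 t : R, 0 <= t <= 1 &
     z = ((1 - t) * a.1 + t * b.1, (1 - t) * a.2 + t * b.2)].

Definition locally_finite (s : omega_space) (mu : set C -> \bar R) : Prop :=
  forall c, Omega s c -> exists2 r : R, 0 < r & (mu (oball s c r) < +oo)%E.

Definition locally_doubling (s : omega_space) (mu : set C -> \bar R) : Prop :=
  exists2 K : R, 1 < K & forall c r, Omega s c -> 0 < r -> r < 1 ->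
    (mu (oball s c r) <= K%:E * mu (oball s c (r / 2)))%E.

End Defs.

From HB Require Import structures.
From mathcomp Require Import all_boot all_order all_algebra.
From mathcomp Require Import all_classical all_reals all_analysis.
From mathcomp Require Import measurable_realfun ring lra.
Set Implicit Arguments.
Unset Strict Implicit.
Unset Printing Implicit Defensive.
Import Order.TTheory GRing.Theory Num.Theory.
Local Open Scope classical_set_scope.
Local Open Scope ring_scope.

(* Measure lengths in units of |b - a| and let T(d) be the rectangle of
   width d around the segment.  For each N, the N + 1 balls of radius 4/N
   centred at the points j/N of the segment pushed a distance 2/N sideways
   cover T(1/N), while the concentric balls of radius 1/(2N) are pairwise
   disjoint, lie in T(3/N) and miss T(1/N).  Since the radii differ by three
   doublings, mu(T(1/N)) <= K^3 * mu(union of the small balls), hence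
   mu(T(1/N)) * (1 + K^-3) <= mu(T(3/N)).  Along N = N0 3^k the masses of the
   tubes, all of which contain the segment, therefore decay geometrically.
   In the disc, hyperbolic and Euclidean distances are comparable on a compact
   neighbourhood of the segment, so hyperbolic doubling gives the same
   comparison of Euclidean balls with a larger constant. *)

Section RealFacts.
Variable R : realType.

Lemma bernoulli_ineq (h : R) k : 0 <= h -> 1 + k%:R * h <= (1 + h) ^+ k.
Proof.
move=> h0; elim: k => [|k IH]; first by rewrite mul0r addr0 expr0.
rewrite exprS -natr1 mulrDl mul1r.
have : 0 <= k%:R * h by rewrite mulr_ge0.
nra.
Qed.

Lemma exists_pow2_gt (x : R) : exists m : nat, x < 2 ^+ m.
Proof.
exists (Num.truncn x).+1; apply: lt_le_trans (truncnS_gt x) _.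
by have := bernoulli_ineq (Num.truncn x).+1 ler01; rewrite mulr1 addrC; lra.
Qed.

Lemma sqr_lt_of_norm_lt (x r : R) : `|x| < r -> x ^+ 2 < r ^+ 2.
Proof. by move=> xr; rewrite -real_normK ?num_real // ltrXn2r. Qed.

Lemma geometric_bound_eq0 (x h M : R) : 0 <= x -> 0 < h ->
  (forall k, x * (1 + h) ^+ k <= M) -> x = 0.
Proof.
move=> x0 h0 xM; apply/eqP; rewrite eq_le x0 andbT leNgt; apply/negP => xp.
pose k := (Num.truncn (M / (x * h))).+1.
have xh : 0 < x * h by rewrite mulr_gt0.
have : M < k%:R * (x * h) by rewrite -ltr_pdivrMr //; exact: truncnS_gt.
have : x * (1 + k%:R * h) <= x * (1 + h) ^+ k.
  by rewrite ler_pM2l //; exact/bernoulli_ineq/ltW.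
have := xM k; nra.
Qed.

Lemma near_grid_point (N : nat) (s : R) : (0 < N)%N ->
  - N%:R^-1 < s < 1 + N%:R^-1 ->
  exists2 j, (j <= N)%N & `|s - j%:R / N%:R| < N%:R^-1.
Proof.
move=> N0 /andP[s_gt s_lt].
have Nr : 0 < (N%:R : R) by rewrite ltr0n.
have Nu : N%:R / N%:R = 1 :> R by rewrite mulfV // gt_eqF.
have [s_le0|s_gt0] := leP s 0.
  by exists 0%N => //; rewrite mul0r subr0 ler0_norm //; lra.
have [s_ge1|s_lt1] := leP 1 s.
  by exists N => //; rewrite Nu ger0_norm; lra.
have sN0 : 0 <= s * N%:R by rewrite mulr_ge0 // ltW.
have /andP[jle jgt] := truncn_itv sN0; set j := Num.truncn _ in jle jgt *.
exists j; first by rewrite -ltnS -(ltr_nat R); apply: le_lt_trans jle _; nra.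
rewrite -natr1 in jgt.
rewrite ger0_norm; last by rewrite subr_ge0 ler_pdivrMr.
have : s < (j%:R + 1) / N%:R by rewrite ltr_pdivlMr.
have -> : (j%:R + 1) / N%:R = j%:R / N%:R + N%:R^-1 :> R by rewrite mulrDl mul1r.
lra.
Qed.

Lemma ereal_ratio_step (X Y Z : \bar R) (K : R) : 0 < K -> (0 <= X)%E ->
  (X <= K%:E * Y)%E -> (X + Y <= Z)%E -> (X * (1 + K^-1)%:E <= Z)%E.
Proof.
move=> K0 X0 XY XYZ; apply: (le_trans _ XYZ).
rewrite EFinD ge0_muleDr ?lee_fin ?invr_ge0 ?(ltW K0) // mule1; apply: leeD2l.
by rewrite lee_pdivrMr // muleC.
Qed.

Lemma measurable_inv : measurable_fun [set: R] (@GRing.inv R).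
Proof.
have -> : [set: R] = (`]-oo, 0[ `|` `]0, +oo[) `|` [set 0].
  apply/seteqP; split => x //= _.
  have [x0|x0|->] := ltgtP x 0; last by right.
  - by left; left; rewrite /= in_itv.
  - by left; right; rewrite /= in_itv /= x0.
have m1 : measurable (`]-oo, 0[ `|` `]0, +oo[ : set R).
  by apply: measurableU; exact: measurable_itv.
apply/(measurable_funU _ m1 (measurable_set1 0)); split; last exact: measurable_fun_set1.
apply/(measurable_funU _ (measurable_itv _) (measurable_itv _)).
split; apply: open_continuous_measurable_fun; try exact: interval_open;
  move=> x; rewrite inE /= in_itv /= ?andbT => x0; apply: inv_continuous.
- by rewrite lt_eqF.
- by rewrite gt_eqF.
Qed.

Lemma measurable_sqrt : measurable_fun [set: R] (@Num.sqrt R).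
Proof. by apply: continuous_measurable_fun; exact: sqrt_continuous. Qed.

Lemma ln_ratio_ge (t : R) : 0 <= t < 1 -> t <= ln ((1 + t) / (1 - t)).
Proof.
move=> /andP[t0 t1]; set q := 2 * t / (1 + t).
have q_lt1 : q < 1 by rewrite ltr_pdivrMr; lra.
have -> : (1 + t) / (1 - t) = (1 + - q)^-1 by rewrite /q; field; lra.
rewrite lnV ?posrE; last lra.
apply: (@le_trans _ _ q); first by rewrite ler_pdivlMr; nra.
by rewrite lerNr; apply: le_ln1Dx; lra.
Qed.

Lemma ln_ratio_le (t : R) : 0 <= t <= 1 / 2 -> ln ((1 + t) / (1 - t)) <= 4 * t.
Proof.
move=> /andP[t0 t1].
have -> : (1 + t) / (1 - t) = 1 + 2 * t / (1 - t) by field; lra.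
have q0 : 0 <= 2 * t / (1 - t) by rewrite divr_ge0; lra.
apply: le_trans (le_ln1Dx _) _; first lra.
by rewrite ler_pdivrMr; [nra | lra].
Qed.

End RealFacts.

Section Measurability.
Context d (T : measurableType d) (R : realType).
Implicit Types f g : T -> R.

Lemma measurable_lt f g : measurable_fun [set: T] f -> measurable_fun [set: T] g ->
  measurable [set z | f z < g z].
Proof.
move=> mf mg; have := measurable_fun_ltr mf mg measurableT (Y := [set true]) I.
by rewrite setTI.
Qed.

Lemma measurable_fun_inv f : measurable_fun [set: T] f ->
  measurable_fun [set: T] (fun z => (f z)^-1).
Proof. by move=> mf; apply: (measurableT_comp _ mf); exact: measurable_inv. Qed.

Lemma measurable_fun_sqrt f : measurable_fun [set: T] f ->
  measurable_fun [set: T] (fun z => Num.sqrt (f z)).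
Proof. by move=> mf; apply: (measurableT_comp _ mf); exact: measurable_sqrt. Qed.

Lemma measurable_fun_ln f : measurable_fun [set: T] f ->
  measurable_fun [set: T] (fun z => ln (f z)).
Proof. by move=> mf; apply: (measurableT_comp _ mf); exact: measurable_ln. Qed.

End Measurability.

Ltac measurable_expr := repeat first
  [ exact: measurable_cst | exact: measurable_fst | exact: measurable_snd
  | apply: measurable_funD | apply: measurable_funB | apply: measurable_funM
  | apply: measurable_funX | apply: measurable_funN
  | apply: measurable_fun_ln | apply: measurable_fun_sqrt
  | apply: measurable_fun_inv ].

Section PlaneGeometry.
Variable R : realType.
Local Notation T := (R * R)%type.
Implicit Types (c z : T) (r : R).

Definition norm2 z := z.1 ^+ 2 + z.2 ^+ 2.
Definition dist2 c z := (c.1 - z.1) ^+ 2 + (c.2 - z.2) ^+ 2.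
Definition eball c r := [set z | eucl_dist c z < r].

Lemma norm2_ge0 z : 0 <= norm2 z.
Proof. by rewrite addr_ge0 ?sqr_ge0. Qed.

Lemma dist2_ge0 c z : 0 <= dist2 c z.
Proof. by rewrite addr_ge0 ?sqr_ge0. Qed.

Lemma eucl_distE c z : eucl_dist c z = Num.sqrt (dist2 c z).
Proof. by []. Qed.

Lemma eballE c r z : 0 < r -> eball c r z <-> dist2 c z < r ^+ 2.
Proof.
move=> r0; rewrite /eball /= eucl_distE -{1}(ger0_norm (ltW r0)) -sqrtr_sqr.
by rewrite ltr_sqrt // exprn_gt0.
Qed.

Lemma eball_center c r : 0 < r -> eball c r c.
Proof. by move=> r0; rewrite /eball /= eucl_distE /dist2 !subrr expr0n addr0 sqrtr0. Qed.

Lemma unit_discE z : unit_disc z <-> norm2 z < 1.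
Proof. by rewrite /unit_disc /= /cabs -/(norm2 z) -{1}sqrtr1 ltr_sqrt. Qed.

Lemma le_eball c r r' : r <= r' -> eball c r `<=` eball c r'.
Proof. by move=> rr' z zr; exact: lt_le_trans zr rr'. Qed.

Lemma le_oball s c r r' : r <= r' -> oball s c r `<=` oball s c r'.
Proof. by move=> rr' z [Oz zr]; split => //; exact: lt_le_trans zr rr'. Qed.

Lemma oball_plane c r : oball Plane c r = eball c r.
Proof. by apply/seteqP; split => z /=; [case | split]. Qed.

Lemma measurable_eball c r : measurable (eball c r).
Proof.
by apply: measurable_lt; rewrite /eucl_dist /cabs /csub /=; measurable_expr.
Qed.

Lemma measurable_oball s c r : measurable (oball s c r).
Proof.
case: s; first by rewrite oball_plane; exact: measurable_eball.
have -> : oball Disc c r = [set z | cabs z < 1] `&` [set z | hyp_dist c z < r].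
  by apply/seteqP; split => z /=.
apply: measurableI; apply: measurable_lt;
  rewrite /hyp_dist /cabs /csub /cmul /cconj /cone /=; measurable_expr.
Qed.

Lemma norm2_le_of_dist2 y z (M : R) : norm2 y <= M -> M < 1 ->
  dist2 y z <= ((1 - M) / 8) ^+ 2 -> norm2 z <= (1 + M) / 2.
Proof.
move=> yM M1 yz; set e := (1 - M) / 8 in yz.
have e0 : 0 <= e by rewrite divr_ge0 // subr_ge0 ltW.
have e1 : e <= 1 / 8 by rewrite ler_pM2r //; have := norm2_ge0 y; lra.
have cauchy_schwarz : (y.1 * (z.1 - y.1) + y.2 * (z.2 - y.2)) ^+ 2 <= norm2 y * dist2 y z.
  have := sqr_ge0 (y.1 * (z.2 - y.2) - y.2 * (z.1 - y.1)); rewrite /norm2 /dist2; nra.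
have dot_le : y.1 * (z.1 - y.1) + y.2 * (z.2 - y.2) <= e.
  have : norm2 y * dist2 y z <= e ^+ 2.
    by rewrite -[e ^+ 2]mul1r ler_pM ?norm2_ge0 ?dist2_ge0 //; lra.
  nra.
have -> : norm2 z = norm2 y + 2 * (y.1 * (z.1 - y.1) + y.2 * (z.2 - y.2)) + dist2 y z.
  by rewrite /norm2 /dist2; ring.
rewrite /e in e0 e1 dot_le yz *; nra.
Qed.

End PlaneGeometry.

Section SegmentCoordinates.
Variables (R : realType) (a b : (R * R)%type).
Hypothesis ab : a != b.
Local Notation T := (R * R)%type.

Definition seg_len2 := dist2 b a.

(* Coordinates in the frame with origin [a], first axis [b - a] and second
   axis [b - a] turned by a right angle; [seg_pt] is the inverse map. *)
Definition seg_pt (s t : R) : T :=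
  (a.1 + s * (b.1 - a.1) - t * (b.2 - a.2), a.2 + s * (b.2 - a.2) + t * (b.1 - a.1)).
Definition seg_s (z : T) :=
  ((z.1 - a.1) * (b.1 - a.1) + (z.2 - a.2) * (b.2 - a.2)) / seg_len2.
Definition seg_t (z : T) :=
  ((z.2 - a.2) * (b.1 - a.1) - (z.1 - a.1) * (b.2 - a.2)) / seg_len2.

Lemma seg_len2_gt0 : 0 < seg_len2.
Proof.
rewrite lt_def dist2_ge0 andbT; apply: contra ab.
rewrite paddr_eq0 ?sqr_ge0 // !sqrf_eq0 !subr_eq0 => /andP[/eqP e1 /eqP e2].
by rewrite [b]surjective_pairing e1 e2 -surjective_pairing.
Qed.

Let len2_neq0 : seg_len2 != 0. Proof. exact: lt0r_neq0 seg_len2_gt0. Qed.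

Lemma seg_s_pt s t : seg_s (seg_pt s t) = s.
Proof. by move: len2_neq0; rewrite /seg_s /seg_pt /seg_len2 /dist2 /= => ?; field. Qed.

Lemma seg_t_pt s t : seg_t (seg_pt s t) = t.
Proof. by move: len2_neq0; rewrite /seg_t /seg_pt /seg_len2 /dist2 /= => ?; field. Qed.

Lemma seg_ptK z : seg_pt (seg_s z) (seg_t z) = z.
Proof.
move: len2_neq0; rewrite /seg_pt /seg_s /seg_t /seg_len2 /dist2 => ?.
by rewrite [RHS]surjective_pairing; congr pair; field.
Qed.

Lemma dist2_seg_pt s t z :
  dist2 (seg_pt s t) z = ((seg_s z - s) ^+ 2 + (seg_t z - t) ^+ 2) * seg_len2.
Proof.
by move: len2_neq0; rewrite /seg_pt /seg_s /seg_t /seg_len2 /dist2 /= => ?; field.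
Qed.

Lemma measurable_seg_s : measurable_fun [set: T] seg_s.
Proof. by rewrite /seg_s; measurable_expr. Qed.

Lemma measurable_seg_t : measurable_fun [set: T] seg_t.
Proof. by rewrite /seg_t; measurable_expr. Qed.

Lemma segmentE : segment a b = seg_s @^-1` `[0, 1] `&` seg_t @^-1` [set 0].
Proof.
apply/seteqP; split => z /=.
  move=> [s s01 ->]; have -> : ((1 - s) * a.1 + s * b.1, (1 - s) * a.2 + s * b.2) = seg_pt s 0.
    by rewrite /seg_pt; congr pair; ring.
  by rewrite seg_s_pt seg_t_pt in_itv.
rewrite in_itv /= => -[s01 t0]; exists (seg_s z) => //.
rewrite -[LHS]seg_ptK t0 /seg_pt; congr pair; ring.
Qed.

Lemma measurable_segment : measurable (segment a b).
Proof.
rewrite segmentE; apply: measurableI; rewrite -[_ @^-1` _]setTI.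
- by apply: measurable_seg_s => //; exact: measurable_itv.
- by apply: measurable_seg_t => //; exact: measurable_set1.
Qed.

Definition rball (s t k : R) := eball (seg_pt s t) (k * Num.sqrt seg_len2).

Lemma rballE s t k z : 0 < k ->
  rball s t k z <-> (seg_s z - s) ^+ 2 + (seg_t z - t) ^+ 2 < k ^+ 2.
Proof.
move=> k0; rewrite /rball eballE ?mulr_gt0 ?sqrtr_gt0 ?seg_len2_gt0 //.
by rewrite dist2_seg_pt exprMn sqr_sqrtr ?ltW ?seg_len2_gt0 // ltr_pM2r ?seg_len2_gt0.
Qed.

Lemma rball_bounds s t k z : 0 < k -> rball s t k z ->
  `|seg_s z - s| < k /\ `|seg_t z - t| < k.
Proof.
move=> k0 /(rballE _ _ _ k0) sum_lt.
have := sqr_ge0 (seg_s z - s); have := sqr_ge0 (seg_t z - t).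
by rewrite !ltr_norml; split; apply/andP; split; nra.
Qed.

Lemma measurable_rball s t k : measurable (rball s t k).
Proof. exact: measurable_eball. Qed.

Definition tube (d : R) := seg_s @^-1` `]- d, 1 + d[ `&` seg_t @^-1` `]- d, d[.

Lemma measurable_tube d : measurable (tube d).
Proof.
apply: measurableI; rewrite -[_ @^-1` _]setTI.
- by apply: measurable_seg_s => //; exact: measurable_itv.
- by apply: measurable_seg_t => //; exact: measurable_itv.
Qed.

Lemma le_tube d d' : d <= d' -> tube d `<=` tube d'.
Proof. by move=> dd' z; rewrite /tube /= !in_itv /= => -[/andP[? ?] /andP[? ?]]; lra. Qed.

Lemma segment_sub_tube d : 0 < d -> segment a b `<=` tube d.
Proof.
by move=> d0 z; rewrite segmentE /tube /= !in_itv /= => -[/andP[? ?] ->]; lra.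
Qed.

Lemma dist2_seg_pt_rball s t k z : 0 < k -> rball s t k z ->
  dist2 (seg_pt s 0) z <= 2 * (k ^+ 2 + t ^+ 2) * seg_len2.
Proof.
move=> k0 /(rballE _ _ _ k0) zk; rewrite dist2_seg_pt ler_pM2r ?seg_len2_gt0 // subr0.
by have := sqr_ge0 (seg_t z - 2 * t); have := sqr_ge0 (seg_s z - s); nra.
Qed.

Lemma norm2_seg_pt_le s : 0 <= s <= 1 -> norm2 (seg_pt s 0) <= Num.max (norm2 a) (norm2 b).
Proof.
move=> /andP[s0 s1].
have : (1 - s) * norm2 a + s * norm2 b - norm2 (seg_pt s 0) = s * (1 - s) * seg_len2.
  by rewrite /norm2 /seg_pt /seg_len2 /dist2 /=; ring.
have : 0 <= s * (1 - s) * seg_len2 by rewrite !mulr_ge0 ?subr_ge0 // ltW ?seg_len2_gt0.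
have : (1 - s) * norm2 a <= (1 - s) * Num.max (norm2 a) (norm2 b).
  by rewrite ler_wpM2l ?subr_ge0 // le_max lexx.
have : s * norm2 b <= s * Num.max (norm2 a) (norm2 b).
  by rewrite ler_wpM2l // le_max lexx orbT.
lra.
Qed.

Lemma rball_sub_norm2_le s t k (Mx := Num.max (norm2 a) (norm2 b)) :
  Mx < 1 -> 0 <= s <= 1 -> 0 < k ->
  2 * (k ^+ 2 + t ^+ 2) * seg_len2 <= ((1 - Mx) / 8) ^+ 2 ->
  rball s t k `<=` [set z | norm2 z <= (1 + Mx) / 2].
Proof.
move=> Mx1 s01 k0 small z zin.
apply: (norm2_le_of_dist2 (norm2_seg_pt_le s01) Mx1).
exact: le_trans (dist2_seg_pt_rball k0 zin) small.
Qed.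

End SegmentCoordinates.

Section PackingArgument.
Variables (R : realType) (a b : (R * R)%type) (mu : {measure set (R * R)%type -> \bar R}).
Hypothesis ab : a != b.
Local Notation rball := (rball a b).
Local Notation tube := (tube a b).
Local Notation seg_s := (seg_s a b).
Local Notation seg_t := (seg_t a b).

Definition segment_doubling (K delta : R) := forall s t k,
  0 <= s <= 1 -> 0 <= t < delta -> 0 < k < delta ->
  (mu (rball s t k) <= K%:E * mu (rball s t (k / 8)))%E /\ (mu (rball s t k) < +oo)%E.

Definition grid_ball (N j : nat) := rball (j%:R / N%:R) (2 / N%:R) (4 / N%:R).
Definition grid_hole (N j : nat) := rball (j%:R / N%:R) (2 / N%:R) (4 / N%:R / 8).

Lemma tube_sub_grid_balls N : (0 < N)%N ->
  tube N%:R^-1 `<=` \big[setU/set0]_(j < N.+1) grid_ball N j.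
Proof.
move=> N0 z; rewrite /tube /= !in_itv /= => -[s_in /andP[t_gt t_lt]].
have u0 : 0 < (N%:R : R)^-1 by rewrite invr_gt0 ltr0n.
have [j jN /sqr_lt_of_norm_lt s_near] := near_grid_point N0 s_in.
rewrite -bigcup_mkord; exists j => //; apply/(rballE ab); first by rewrite divr_gt0 ?ltr0n.
have /sqr_lt_of_norm_lt : `|seg_t z - 2 / N%:R| < 3 / N%:R by rewrite ltr_norml; lra.
have := exprn_gt0 2 u0.
lra.
Qed.

Lemma grid_hole_bounds N j z : (0 < N)%N -> grid_hole N j z ->
  `|seg_s z - j%:R / N%:R| < N%:R^-1 / 2 /\ `|seg_t z - 2 / N%:R| < N%:R^-1 / 2.
Proof.
move=> N0; rewrite /grid_hole.
have -> : 4 / N%:R / 8 = N%:R^-1 / 2 :> R by field; rewrite pnatr_eq0 -lt0n.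
by apply: (rball_bounds ab); rewrite divr_gt0 ?invr_gt0 ?ltr0n.
Qed.

Lemma grid_hole_sub_tube N j : (0 < N)%N -> (j <= N)%N -> grid_hole N j `<=` tube (3 / N%:R).
Proof.
move=> N0 jN z /(grid_hole_bounds N0); rewrite !ltr_norml => -[/andP[s1 s2] /andP[t1 t2]].
have u0 : 0 < (N%:R : R)^-1 by rewrite invr_gt0 ltr0n.
have j0 : 0 <= j%:R / N%:R :> R by rewrite divr_ge0.
have j1 : j%:R / N%:R <= 1 :> R by rewrite ler_pdivrMr ?ltr0n // mul1r ler_nat.
rewrite /tube /= !in_itv /=; lra.
Qed.

Lemma grid_hole_disjoint_tube N j : (0 < N)%N -> grid_hole N j `&` tube N%:R^-1 = set0.
Proof.
move=> N0; apply/seteqP; split => // z [/(grid_hole_bounds N0) [_]].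
rewrite ltr_norml /tube /= !in_itv /= => /andP[? ?] [_ /andP[? ?]].
have : 0 < (N%:R : R)^-1 by rewrite invr_gt0 ltr0n.
lra.
Qed.

Lemma trivIset_grid_holes N : (0 < N)%N ->
  trivIset [set: 'I_N.+1] (fun j => grid_hole N j).
Proof.
move=> N0 i j _ _ [z [/(grid_hole_bounds N0) [si _] /(grid_hole_bounds N0) [sj _]]].
have u0 : 0 < (N%:R : R)^-1 by rewrite invr_gt0 ltr0n.
have le_ij (p q : nat) : `|seg_s z - p%:R / N%:R| < N%:R^-1 / 2 ->
    `|seg_s z - q%:R / N%:R| < N%:R^-1 / 2 -> (p <= q)%N.
  rewrite !ltr_norml => /andP[? ?] /andP[? ?].
  by rewrite -ltnS -(ltr_nat R) -natr1 -(ltr_pM2r u0) mulrDl mul1r; lra.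
by apply: val_inj; apply/eqP; rewrite eqn_leq !le_ij.
Qed.

Lemma tube_step N K : (0 < N)%N -> 0 < K ->
  (forall j, (j <= N)%N -> (mu (grid_ball N j) <= K%:E * mu (grid_hole N j))%E) ->
  (mu (tube N%:R^-1) * (1 + K^-1)%:E <= mu (tube (3 / N%:R)))%E.
Proof.
move=> N0 K0 ball_hole.
set holes := \big[setU/set0]_(j < N.+1) grid_hole N j.
have m_holes : measurable holes.
  by apply: bigsetU_measurable => j _; exact: measurable_rball.
apply: (ereal_ratio_step (Y := mu holes)) => //.
- have cover : (mu (tube N%:R^-1) <= \sum_(j < N.+1) mu (grid_ball N j))%E.
    apply: content_subadditive (tube_sub_grid_balls N0); last exact: measurable_tube.
    by move=> j _; exact: measurable_rball.
  apply: le_trans cover _.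
  apply: (@le_trans _ _ (\sum_(j < N.+1) K%:E * mu (grid_hole N j))%E).
    by apply: lee_sum => j _; apply: ball_hole; rewrite -ltnS.
  rewrite -ge0_sume_distrr // /holes measure_bigsetU_ord //.
    by move=> j; exact: measurable_rball.
  exact: trivIset_grid_holes.
- have disj : tube N%:R^-1 `&` holes = set0.
    apply/seteqP; split => // z [tz]; rewrite /holes -bigcup_mkord => -[j _ hz].
    by rewrite -(grid_hole_disjoint_tube j N0); split.
  rewrite -measureU //; last exact: measurable_tube.
  apply: le_measure; rewrite ?inE.
  + by apply: measurableU => //; exact: measurable_tube.
  + exact: measurable_tube.
  rewrite subUset; split.
    by apply: le_tube; rewrite ler_pdivlMr ?ltr0n // mulVf ?pnatr_eq0 -?lt0n //; lra.
  by rewrite /holes -bigcup_mkord => z [j /= jN]; apply: grid_hole_sub_tube.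
Qed.

Lemma grid_doubling K delta N j : 0 < delta -> segment_doubling K delta ->
  (0 < N)%N -> 4 / delta < N%:R -> (j <= N)%N ->
  (mu (grid_ball N j) <= K%:E * mu (grid_hole N j))%E /\ (mu (grid_ball N j) < +oo)%E.
Proof.
move=> d0 dbl N0 Nd jN; have Nr : 0 < (N%:R : R) by rewrite ltr0n.
move: Nd; rewrite ltr_pdivrMr // => Nd.
apply: dbl; apply/andP; split.
- by rewrite divr_ge0.
- by rewrite ler_pdivrMr // mul1r ler_nat.
- by rewrite divr_ge0.
- by rewrite ltr_pdivrMr //; lra.
- by rewrite divr_gt0.
- by rewrite ltr_pdivrMr // mulrC.
Qed.

Lemma segment_null_of_doubling K delta : 0 < K -> 0 < delta ->
  segment_doubling K delta -> mu (segment a b) = 0%E.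
Proof.
move=> K0 d0 dbl.
pose N k := ((Num.truncn (4 / delta)).+1 * 3 ^ k)%N.
have N_gt0 k : (0 < N k)%N by rewrite muln_gt0 expn_gt0.
have N_big k : 4 / delta < (N k)%:R.
  by apply: lt_le_trans (truncnS_gt _) _; rewrite ler_nat leq_pmulr // expn_gt0.
have N_succ k : 3 / (N k.+1)%:R = (N k)%:R^-1 :> R.
  by rewrite /N expnS mulnCA natrM invfM mulrA mulfV ?mul1r.
have dbl_N k j : (j <= N k)%N -> _ := grid_doubling d0 dbl (N_gt0 k) (N_big k).
set M := mu (tube (N 0)%:R^-1).
have M_fin : (M < +oo)%E.
  have cover := tube_sub_grid_balls (N_gt0 0).
  apply: le_lt_trans (content_subadditive mu _ _ cover) _.
  - by move=> j _; exact: measurable_rball.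
  - exact: measurable_tube.
  by apply: lte_sum_pinfty => j _; apply: (dbl_N 0 j _).2; rewrite -ltnS.
have decay k : (mu (tube (N k)%:R^-1) * ((1 + K^-1) ^+ k)%:E <= M)%E.
  elim: k => [|k IH]; first by rewrite expr0 mule1.
  apply: le_trans IH; rewrite exprS EFinM muleA.
  apply: lee_wpmul2r; first by rewrite lee_fin exprn_ge0 // addr_ge0 // invr_ge0 ltW.
  by rewrite -(N_succ k); apply: tube_step => // j /(dbl_N k.+1 j) [].
have seg_le k : (mu (segment a b) <= mu (tube (N k)%:R^-1))%E.
  apply: le_measure; rewrite ?inE; [exact: (measurable_segment ab) | exact: measurable_tube |].
  by apply: (segment_sub_tube ab); rewrite invr_gt0 ltr0n.
have seg_fin : mu (segment a b) \is a fin_num.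
  by rewrite ge0_fin_numE //; exact: le_lt_trans (seg_le 0) M_fin.
rewrite -(fineK seg_fin); congr EFin.
apply: (@geometric_bound_eq0 _ _ K^-1 (fine M)); first exact: fine_ge0.
  by rewrite invr_gt0.
move=> k; rewrite -lee_fin EFinM fineK // fineK ?ge0_fin_numE ?measure_ge0 //.
apply: le_trans (decay k); apply: lee_wpmul2r (seg_le k).
by rewrite lee_fin exprn_ge0 // addr_ge0 // invr_ge0 ltW.
Qed.

End PackingArgument.

Section DoublingBalls.
Variables (R : realType) (s : omega_space) (mu : {measure set (R * R)%type -> \bar R}).
Variable K : R.
Hypothesis K_ge0 : 0 <= K.
Hypothesis mu_doubling : forall c r, Omega s c -> 0 < r -> r < 1 ->
  (mu (oball s c r) <= K%:E * mu (oball s c (r / 2)))%E.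

Lemma oball_doubling_iter c r m : Omega s c -> 0 < r -> r < 1 ->
  (mu (oball s c r) <= (K ^+ m)%:E * mu (oball s c (r / 2 ^+ m)))%E.
Proof.
move=> Oc r0 r1; elim: m => [|m IH]; first by rewrite expr0 divr1 mul1e.
apply: le_trans IH _.
have r_m0 : 0 < r / 2 ^+ m by rewrite divr_gt0 // exprn_gt0.
have r_m1 : r / 2 ^+ m < 1.
  apply: le_lt_trans r1; rewrite ler_pdivrMr ?exprn_gt0 //.
  by apply: ler_peMr; [exact: ltW | apply: exprn_ege1; lra].
apply: le_trans (lee_wpmul2l _ (mu_doubling Oc r_m0 r_m1)) _.
  by rewrite lee_fin exprn_ge0.
have -> : r / 2 ^+ m / 2 = r / 2 ^+ m.+1 by rewrite exprSr invfM mulrA.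
by rewrite muleA -EFinM -exprSr.
Qed.

Lemma oball_finite c r : locally_finite s mu -> Omega s c -> 0 < r -> r < 1 ->
  (mu (oball s c r) < +oo)%E.
Proof.
move=> fin Oc r0 r1; have [r' r'0 fin_r'] := fin c Oc.
have [m r_lt] := exists_pow2_gt (r / r').
apply: le_lt_trans (oball_doubling_iter m Oc r0 r1) _.
apply: lte_mul_pinfty; [by rewrite lee_fin exprn_ge0 | by [] |].
apply: le_lt_trans fin_r'; apply: le_measure; rewrite ?inE; try exact: measurable_oball.
by apply: le_oball; rewrite ler_pdivrMr ?exprn_gt0 // mulrC -ler_pdivrMr // ltW.
Qed.

End DoublingBalls.

Lemma plane_segment_doubling (R : realType) (a b : (R * R)%type)
    (mu : {measure set (R * R)%type -> \bar R}) (K : R) :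
  a != b -> 0 <= K -> locally_finite Plane mu ->
  (forall c r, Omega Plane c -> 0 < r -> r < 1 ->
    (mu (oball Plane c r) <= K%:E * mu (oball Plane c (r / 2)))%E) ->
  segment_doubling a b mu (K ^+ 3) (Num.sqrt (seg_len2 a b))^-1.
Proof.
move=> ab K0 fin dbl s t k _ _ /andP[k0 k_lt].
have L0 : 0 < Num.sqrt (seg_len2 a b) by rewrite sqrtr_gt0 seg_len2_gt0.
have r0 : 0 < k * Num.sqrt (seg_len2 a b) by rewrite mulr_gt0.
have r1 : k * Num.sqrt (seg_len2 a b) < 1.
  by move: k_lt; rewrite -(ltr_pM2r L0) mulVf // gt_eqF.
rewrite /rball -!oball_plane; split; last exact: (oball_finite K0 dbl fin I r0 r1).
have -> : k / 8 * Num.sqrt (seg_len2 a b) = k * Num.sqrt (seg_len2 a b) / 2 ^+ 3.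
  by rewrite mulrAC -natrX.
exact: (oball_doubling_iter K0 dbl 3 I r0 r1).
Qed.

Section HyperbolicDistance.
Variable R : realType.
Local Notation T := (R * R)%type.
Implicit Types (c z : T) (r M : R).

Definition mobius_den c z := cabs (csub (cone R) (cmul (cconj z) c)).

Lemma hyp_distE c z : hyp_dist c z =
  ln ((1 + eucl_dist c z / mobius_den c z) / (1 - eucl_dist c z / mobius_den c z)).
Proof. by []. Qed.

Lemma mobius_denE c z :
  mobius_den c z = Num.sqrt (dist2 c z + (1 - norm2 c) * (1 - norm2 z)).
Proof. by rewrite /mobius_den /cabs /=; congr Num.sqrt; rewrite /dist2 /norm2; ring. Qed.

Lemma eucl_le_hyp c z : norm2 c < 1 -> norm2 z < 1 -> eucl_dist c z <= 3 * hyp_dist c z.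
Proof.
move=> hc hz; have c0 := norm2_ge0 c; have z0 := norm2_ge0 z.
have prod_gt0 : 0 < (1 - norm2 c) * (1 - norm2 z) by rewrite mulr_gt0 // subr_gt0.
have P_lt_Q : eucl_dist c z < mobius_den c z.
  by rewrite eucl_distE mobius_denE ltr_sqrt ?ltrDl // ltr_wpDl ?dist2_ge0.
have Q_le3 : mobius_den c z <= 3.
  rewrite mobius_denE -[3]ger0_norm // -sqrtr_sqr ler_sqrt //.
  have : dist2 c z <= 2 * norm2 c + 2 * norm2 z.
    by have := sqr_ge0 (c.1 + z.1); have := sqr_ge0 (c.2 + z.2); rewrite /dist2 /norm2; nra.
  have : (1 - norm2 c) * (1 - norm2 z) <= 1 by nra.
  lra.
have P0 : 0 <= eucl_dist c z by rewrite eucl_distE sqrtr_ge0.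
have Q0 : 0 < mobius_den c z by apply: le_lt_trans P_lt_Q.
have t01 : 0 <= eucl_dist c z / mobius_den c z < 1.
  by apply/andP; split; [rewrite divr_ge0 // ltW | rewrite ltr_pdivrMr // mul1r].
rewrite hyp_distE; apply: le_trans (_ : 3 * (eucl_dist c z / mobius_den c z) <= _).
  by rewrite mulrA ler_pdivlMr // [3 * _]mulrC ler_wpM2l.
by rewrite ler_pM2l //; exact: ln_ratio_ge.
Qed.

Lemma hyp_le_eucl c z M : norm2 c <= M -> norm2 z <= M -> M < 1 ->
  eucl_dist c z <= (1 - M) / 2 -> hyp_dist c z <= 4 * eucl_dist c z / (1 - M).
Proof.
move=> hc hz M1 Pd; have c0 := norm2_ge0 c; have z0 := norm2_ge0 z.
have g0 : 0 < 1 - M by rewrite subr_gt0.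
have Q_ge : 1 - M <= mobius_den c z.
  rewrite mobius_denE -[1 - M](ger0_norm (ltW g0)) -sqrtr_sqr ler_sqrt; last first.
    by rewrite addr_ge0 ?dist2_ge0 // mulr_ge0 // subr_ge0; lra.
  have : (1 - M) ^+ 2 <= (1 - norm2 c) * (1 - norm2 z) by rewrite expr2 ler_pM //; lra.
  have := dist2_ge0 c z; lra.
have P0 : 0 <= eucl_dist c z by rewrite eucl_distE sqrtr_ge0.
have Q0 : 0 < mobius_den c z by apply: lt_le_trans Q_ge.
have t_le : eucl_dist c z / mobius_den c z <= eucl_dist c z / (1 - M).
  by rewrite ler_pdivrMr // mulrAC ler_pdivlMr // ler_wpM2l.
have t_half : eucl_dist c z / (1 - M) <= 1 / 2.
  by rewrite ler_pdivrMr // mulrAC ler_pdivlMr //; lra.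
have t_in : 0 <= eucl_dist c z / mobius_den c z <= 1 / 2.
  by apply/andP; split; [rewrite divr_ge0 // ltW | exact: le_trans t_half].
rewrite hyp_distE; apply: (le_trans (ln_ratio_le t_in)).
by rewrite -mulrA ler_pM2l.
Qed.

Lemma oball_disc_sub_eball c r : norm2 c < 1 -> oball Disc c r `<=` eball c (3 * r).
Proof.
move=> hc z [/unit_discE hz hd]; have := eucl_le_hyp hc hz.
by rewrite /eball /=; move: hd => /= hd; lra.
Qed.

Lemma eball_sub_oball_disc c r M : M < 1 -> norm2 c <= M -> r <= (1 - M) / 2 ->
  eball c r `<=` [set z | norm2 z <= M] -> eball c r `<=` oball Disc c (4 * r / (1 - M)).
Proof.
move=> M1 hc r_le near_c z zr; have hz : norm2 z <= M := near_c z zr.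
have g0 : 0 < 1 - M by rewrite subr_gt0.
split; first by apply/unit_discE; lra.
have zr' : eucl_dist c z < r := zr.
apply: le_lt_trans (hyp_le_eucl hc hz M1 _) _; first lra.
by rewrite ltr_pM2r ?invr_gt0 // ltr_pM2l.
Qed.

End HyperbolicDistance.

Section DiscEuclideanBalls.
Variables (R : realType) (mu : {measure set (R * R)%type -> \bar R}) (K : R).
Hypothesis K_ge0 : 0 <= K.
Hypothesis mu_doubling : forall c r, Omega Disc c -> 0 < r -> r < 1 ->
  (mu (oball Disc c r) <= K%:E * mu (oball Disc c (r / 2)))%E.

Lemma disc_radius_bounds (M r : R) : M < 1 -> 0 < r -> r <= (1 - M) / 8 ->
  0 < 4 * r / (1 - M) < 1.
Proof.
move=> M1 r0 rM; have g0 : 0 < 1 - M by rewrite subr_gt0.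
by rewrite divr_gt0 ?mulr_gt0 //= ltr_pdivrMr // mul1r; lra.
Qed.

Lemma disc_eball_doubling (M r : R) c m : M < 1 -> norm2 c <= M -> 0 < r ->
  r <= (1 - M) / 8 -> eball c r `<=` [set z | norm2 z <= M] ->
  96 <= (1 - M) * 2 ^+ m ->
  (mu (eball c r) <= (K ^+ m)%:E * mu (eball c (r / 8)))%E.
Proof.
move=> M1 cM r0 rM ball_in m_big; have g0 : 0 < 1 - M by rewrite subr_gt0.
have c1 : norm2 c < 1 by exact: le_lt_trans cM M1.
have /andP[rho0 rho1] := disc_radius_bounds M1 r0 rM.
have r_half : r <= (1 - M) / 2 by lra.
have sub := eball_sub_oball_disc M1 cM r_half ball_in.
have mu_sub : (mu (eball c r) <= mu (oball Disc c (4 * r / (1 - M))))%E.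
  by apply: le_measure; rewrite ?inE; [exact: measurable_eball | exact: measurable_oball |].
apply: le_trans mu_sub _.
apply: le_trans (oball_doubling_iter K_ge0 mu_doubling m ((unit_discE c).2 c1) rho0 rho1) _.
apply: lee_wpmul2l; first by rewrite lee_fin exprn_ge0.
set rho := 4 * r / (1 - M) / 2 ^+ m.
have rho_le : 3 * rho <= r / 8.
  have p0 : 0 < (2 : R) ^+ m by rewrite exprn_gt0.
  have -> : 3 * rho = 12 * r / ((1 - M) * 2 ^+ m).
    by rewrite /rho; field; rewrite ?gt_eqF.
  rewrite ler_pdivrMr ?mulr_gt0 //; nra.
apply: le_measure; rewrite ?inE; [exact: measurable_oball | exact: measurable_eball |].
by move=> z /(oball_disc_sub_eball c1); exact: (le_eball rho_le).
Qed.

Lemma disc_eball_finite (M r : R) c : locally_finite Disc mu -> M < 1 -> norm2 c <= M ->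
  0 < r -> r <= (1 - M) / 8 -> eball c r `<=` [set z | norm2 z <= M] ->
  (mu (eball c r) < +oo)%E.
Proof.
move=> fin M1 cM r0 rM ball_in.
have c1 : norm2 c < 1 by exact: le_lt_trans cM M1.
have /andP[rho0 rho1] := disc_radius_bounds M1 r0 rM.
have g0 : 0 < 1 - M by rewrite subr_gt0.
have r_half : r <= (1 - M) / 2 by lra.
apply: le_lt_trans (oball_finite K_ge0 mu_doubling fin ((unit_discE c).2 c1) rho0 rho1).
apply: le_measure; rewrite ?inE; [exact: measurable_eball | exact: measurable_oball |].
exact: (eball_sub_oball_disc M1 cM r_half ball_in).
Qed.

End DiscEuclideanBalls.

Lemma disc_segment_doubling (R : realType) (a b : (R * R)%type)
    (mu : {measure set (R * R)%type -> \bar R}) (K : R) :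
  a != b -> 0 <= K -> segment a b `<=` unit_disc (R:=R) -> locally_finite Disc mu ->
  (forall c r, Omega Disc c -> 0 < r -> r < 1 ->
    (mu (oball Disc c r) <= K%:E * mu (oball Disc c (r / 2)))%E) ->
  exists m : nat, exists2 delta : R, 0 < delta & segment_doubling a b mu (K ^+ m) delta.
Proof.
move=> ab K0 seg_disc fin dbl.
set Mx := Num.max (norm2 a) (norm2 b).
have seg_a : segment a b a.
  by exists 0; rewrite ?lexx ?ler01 // [LHS]surjective_pairing; congr pair; ring.
have seg_b : segment a b b.
  by exists 1; rewrite ?lexx ?ler01 // [LHS]surjective_pairing; congr pair; ring.
have Mx1 : Mx < 1 by rewrite gt_max; apply/andP; split; apply/unit_discE/seg_disc.
set M := (1 + Mx) / 2; set eps := (1 - Mx) / 8; set L := Num.sqrt (seg_len2 a b).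
have L0 : 0 < L by rewrite sqrtr_gt0 seg_len2_gt0.
have eps0 : 0 < eps by rewrite divr_gt0 // subr_gt0.
have L2 : seg_len2 a b = L ^+ 2 by rewrite sqr_sqrtr // ltW // seg_len2_gt0.
have [m m_big] := exists_pow2_gt (96 / (1 - M)).
exists m, (eps / (2 * L)); first by rewrite divr_gt0 // mulr_gt0.
move=> s t k /andP[s0 s1] /andP[t0 t_lt] /andP[k0 k_lt].
have kL : k * L < eps / 2.
  have : k * (2 * L) < eps by rewrite -ltr_pdivlMr ?mulr_gt0.
  lra.
have tL : t * L < eps / 2.
  have : t * (2 * L) < eps by rewrite -ltr_pdivlMr ?mulr_gt0.
  lra.
have r0 : 0 < k * L by rewrite mulr_gt0.
have ball_in : eball (seg_pt a b s t) (k * L) `<=` [set z | norm2 z <= M].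
  apply: (rball_sub_norm2_le ab Mx1 _ k0); first by rewrite s0 s1.
  rewrite L2 -/eps.
  have tL0 : 0 <= t * L by rewrite mulr_ge0 // ltW.
  have : 0 < (eps / 2 - k * L) * (eps / 2 + k * L) by rewrite mulr_gt0 //; lra.
  have : 0 < (eps / 2 - t * L) * (eps / 2 + t * L) by rewrite mulr_gt0 //; lra.
  have -> : 2 * (k ^+ 2 + t ^+ 2) * L ^+ 2 = 2 * ((k * L) ^+ 2 + (t * L) ^+ 2) by ring.
  lra.
have c_in : norm2 (seg_pt a b s t) <= M := ball_in _ (eball_center _ r0).
have rM : k * L <= (1 - M) / 8 by move: kL; rewrite /M /eps; lra.
have M1 : M < 1 by rewrite /M; lra.
split; last exact: (disc_eball_finite K0 dbl fin M1 c_in r0 rM ball_in).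
rewrite /rball -/L mulrAC; apply: (disc_eball_doubling K0 dbl M1 c_in r0 rM ball_in).
have g0 : 0 < 1 - M by rewrite subr_gt0.
by move: m_big; rewrite ltr_pdivrMr // mulrC => /ltW.
Qed.

Theorem lemma2 (R : realType) (s : omega_space)
    (mu : {measure set (R * R)%type -> \bar R}) (a b : (R * R)%type) :
  a <> b -> segment a b `<=` Omega s ->
  locally_finite s mu -> locally_doubling s mu ->
  mu (segment a b) = 0%E.
Proof.
move=> /eqP ab seg_in fin [K K1 dbl].
have K0 : 0 < K by exact: lt_trans ltr01 K1.
case: s seg_in fin dbl => seg_in fin dbl.
- apply: (segment_null_of_doubling ab (exprn_gt0 3 K0) _
    (plane_segment_doubling ab (ltW K0) fin dbl)).
  by rewrite invr_gt0 sqrtr_gt0 seg_len2_gt0.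
- have [m [delta delta0 seg_dbl]] := disc_segment_doubling ab (ltW K0) seg_in fin dbl.
  exact: (segment_null_of_doubling ab (exprn_gt0 m K0) delta0 seg_dbl).
Qed.
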